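(* Let $X$ be a Tychonoff space and let $\upsilon$ be a finite-component cover of $X$. Then the family $$\exp_\beta\upsilon=\{O\langle U_1,\dots,U_n\rangle\cap\exp_\beta X:\ U_i\in\upsilon,\ i=1,\dots,n;\ n\in\mathbb N\}$$ is a finite-component cover of the space $\exp_\beta X$.
   Context: All spaces are $T_1$. A collection $\omega$ of subsets of a set is star-finite if each element of $\omega$ meets only finitely many elements of $\omega$. A finite sequence $M_0,\dots,M_s$ of sets is a chain connecting $M_0$ and $M_s$ if $M_{i-1}\cap M_i\neq\varnothing$ for $i=1,\dots,s$; a collection is connected if any two of its members are connected by a chain in it; the maximal connected subcollections of $\omega$ are the components of $\omega$. A finite-component cover of a space is a star-finite open cover each of whose components has finitely many elements. For a space $Z$, $\exp Z$ is the set of nonempty closed subsets of $Z$ with the Vietoris topology, whose base consists of the sets $O\langle U_1,\dots,U_n\rangle=\{F\in\exp Z: F\subset\bigcup_{i=1}^n U_i,\ F\cap U_i\neq\varnothing\ (i=1,\dots,n)\}$, $U_i$ nonempty open in $Z$. For a Tychonoff space $X$, $\exp_\beta X=\{F\in\exp\beta X: F\subset X\}$ (the nonempty compact subsets of $X$) with the subspace topology from $\exp\beta X$, where $\beta X$ is the Stone–Čech compactification. *)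

From Stdlib Require Import Reals List.
Set Implicit Arguments.
Open Scope R_scope.

Definition set (T : Type) := T -> Prop.

Definition meets (T : Type) (A B : set T) : Prop := exists x, A x /\ B x.

Record topology (T : Type) := Topology {
  open : set T -> Prop;
  open_setT : open (fun _ => True);
  open_inter : forall U V, open U -> open V -> open (fun x => U x /\ V x);
  open_bigunion : forall F : set (set T),
      (forall U, F U -> open U) -> open (fun x => exists U, F U /\ U x)
}.

Definition closed (T : Type) (t : topology T) (C : set T) : Prop :=
  open t (fun x => ~ C x).

Definition T1_space (T : Type) (t : topology T) : Prop :=
  forall x y : T, x <> y -> exists U, open t U /\ U x /\ ~ U y.

Definition continuous_real (T : Type) (t : topology T) (f : T -> R) : Prop :=
  forall V : set R,
    (forall y, V y -> exists e, 0 < e /\ forall z, Rabs (z - y) < e -> V z) ->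
    open t (fun x => V (f x)).

Definition tychonoff (T : Type) (t : topology T) : Prop :=
  T1_space t /\
  forall (C : set T) (x : T), closed t C -> ~ C x ->
    exists f : T -> R, continuous_real t f /\ (forall y, 0 <= f y <= 1) /\
      f x = 0 /\ (forall y, C y -> f y = 1).

Definition compact_subset (T : Type) (t : topology T) (F : set T) : Prop :=
  forall (I : Type) (U : I -> set T),
    (forall i, open t (U i)) -> (forall x, F x -> exists i, U i x) ->
    exists l : list I, forall x, F x -> exists i, In i l /\ U i x.

Definition finite_coll (T : Type) (c : set (set T)) : Prop :=
  exists l : list (set T), forall B, c B -> In B l.

Definition star_finite (T : Type) (w : set (set T)) : Prop :=
  forall A, w A -> finite_coll (fun B => w B /\ meets A B).

Inductive chained (T : Type) (w : set (set T)) (A : set T) : set T -> Prop :=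
| chained_refl : w A -> chained w A A
| chained_step : forall B C, chained w A B -> w C -> meets B C -> chained w A C.

Definition component (T : Type) (w : set (set T)) (A : set T) : set (set T) :=
  fun B => chained w A B.

Definition open_cover (T : Type) (op : set T -> Prop) (w : set (set T)) : Prop :=
  (forall U, w U -> op U) /\ (forall x, exists U, w U /\ U x).

Definition finite_component_cover (T : Type) (op : set T -> Prop)
    (w : set (set T)) : Prop :=
  open_cover op w /\ star_finite w /\
  (forall A, w A -> finite_coll (component w A)).

(* points: nonempty compact subsets of X *)
Definition expb (T : Type) (t : topology T) : Type :=
  { F : set T | (exists x, F x) /\ compact_subset t F }.

Definition vietoris_basic (T : Type) (t : topology T) (Us : list (set T))
    : set (expb t) :=
  fun F => (forall x, proj1_sig F x -> exists U, In U Us /\ U x) /\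
           (forall U, In U Us -> exists x, proj1_sig F x /\ U x).

Definition expb_open (T : Type) (t : topology T) (W : set (expb t)) : Prop :=
  forall F, W F -> exists Us : list (set T),
    Us <> nil /\ (forall U, In U Us -> open t U /\ exists x, U x) /\
    vietoris_basic Us F /\ (forall G, vietoris_basic Us G -> W G).

Definition expb_family (T : Type) (t : topology T) (v : set (set T))
    : set (set (expb t)) :=
  fun W => exists Us : list (set T),
    Us <> nil /\ (forall U, In U Us -> v U) /\ W = vietoris_basic Us.

(* A basic set O<U_1,...,U_n> of exp_beta(upsilon) meets O<V_1,...,V_m> only if
   every V_j meets some U_i, since a common point F is covered by the U_i and
   meets every V_j.  Iterating along chains, every member of the component of
   O<U_1,...,U_n> is a basic set built from members of the (finitely many,
   finite) components of the U_i in upsilon.  As a finite collection of sets has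
   only finitely many finite subfamilies, star-finiteness and finiteness of
   components pass from upsilon to exp_beta(upsilon).  The points of exp_beta X
   are compact, which gives the covering property. *)
From Stdlib Require Import List.
From Stdlib Require Import Classical FunctionalExtensionality PropExtensionality.
Set Implicit Arguments.

Fixpoint sublists (A : Type) (l : list A) : list (list A) :=
  match l with
  | nil => nil :: nil
  | a :: l => sublists l ++ map (cons a) (sublists l)
  end.

Lemma sublists_complete (A : Type) (L Us : list A) :
  exists l, In l (sublists L) /\ forall U, In U l <-> In U Us /\ In U L.
Proof.
  induction L as [|a L [l [Hl Hmem]]]; simpl.
  - exists nil; split; [left; reflexivity | intros U; simpl; tauto].
  - destruct (classic (In a Us)) as [Ha | Ha].
    + exists (a :: l); split.
      * apply in_or_app; right; apply in_map; exact Hl.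
      * intros U; simpl; rewrite Hmem; split.
        -- intros [<- | [? ?]]; auto.
        -- intros [? [<- | ?]]; auto.
    + exists l; split.
      * apply in_or_app; left; exact Hl.
      * intros U; rewrite Hmem; split.
        -- intros [? ?]; auto.
        -- intros [? [<- | ?]]; [contradiction | auto].
Qed.

Lemma finite_coll_sub (T : Type) (c d : set (set T)) :
  (forall B, c B -> d B) -> finite_coll d -> finite_coll c.
Proof. intros Hcd [l Hl]; exists l; auto. Qed.

Lemma finite_coll_list_union (T : Type) (Q : set T -> set (set T)) (Us : list (set T)) :
  (forall U, In U Us -> finite_coll (Q U)) ->
  finite_coll (fun B => exists U, In U Us /\ Q U B).
Proof.
  induction Us as [|a Us IH]; intros Hfin.
  - exists nil; intros B [U [[] _]].
  - destruct IH as [L HL]; [intros U HU; apply Hfin; right; exact HU |].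
    destruct (Hfin a (or_introl eq_refl)) as [l Hl].
    exists (l ++ L); intros B [U [[<- | HU] HQ]]; apply in_or_app; eauto.
Qed.

Section Vietoris.

Variables (X : Type) (t : topology X).

Lemma vietoris_basic_ext (Us Vs : list (set X)) :
  (forall U, In U Us <-> In U Vs) -> vietoris_basic (t:=t) Us = vietoris_basic Vs.
Proof.
  intros H. extensionality F. apply propositional_extensionality.
  unfold vietoris_basic; split; intros [Hcov Hmeet]; split.
  - intros x Fx; destruct (Hcov x Fx) as [U [HU Ux]]; exists U; rewrite <- H; auto.
  - intros U HU; apply Hmeet; rewrite H; exact HU.
  - intros x Fx; destruct (Hcov x Fx) as [U [HU Ux]]; exists U; rewrite H; auto.
  - intros U HU; apply Hmeet; rewrite <- H; exact HU.
Qed.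

Lemma finite_coll_vietoris_basic (P : set (set X)) :
  finite_coll P ->
  finite_coll (fun W => exists Us, (forall U, In U Us -> P U) /\
                                   W = vietoris_basic (t:=t) Us).
Proof.
  intros [L HL]. exists (map (@vietoris_basic X t) (sublists L)).
  intros W [Us [HUs ->]]. destruct (sublists_complete L Us) as [l [Hl Hmem]].
  rewrite (vietoris_basic_ext Us l).
  - apply in_map; exact Hl.
  - intros U; rewrite Hmem; split; [auto | tauto].
Qed.

Lemma meets_vietoris_basic (Us Vs : list (set X)) :
  meets (vietoris_basic (t:=t) Us) (vietoris_basic Vs) ->
  forall V, In V Vs -> exists U, In U Us /\ meets U V.
Proof.
  intros [F [[Hcov _] [_ Hmeet]]] V HV.
  destruct (Hmeet V HV) as [x [Fx Vx]].
  destruct (Hcov x Fx) as [U [HU Ux]].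
  exists U; split; [exact HU | exists x; auto].
Qed.

Variable v : set (set X).

Lemma component_expb_family (Us : list (set X)) (W : set (expb t)) :
  (forall U, In U Us -> v U) ->
  component (@expb_family X t v) (vietoris_basic Us) W ->
  exists Vs, W = vietoris_basic Vs /\
    forall V, In V Vs -> exists U, In U Us /\ chained v U V.
Proof.
  intros HUs HW; induction HW as [_ | W W' _ IH [Vs' [_ [HVs' ->]]] Hmeet].
  - exists Us; split; [reflexivity |].
    intros U HU; exists U; split; [exact HU | apply chained_refl, HUs, HU].
  - destruct IH as [Vs [-> HVs]].
    exists Vs'; split; [reflexivity |].
    intros V' HV'. destruct (meets_vietoris_basic Hmeet V' HV') as [V [HV HVV']].
    destruct (HVs V HV) as [U [HU HUV]].
    exists U; split; [exact HU | apply chained_step with V; auto].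
Qed.

Lemma expb_family_open :
  (forall U, v U -> open t U) ->
  forall W, @expb_family X t v W -> expb_open W.
Proof.
  intros Hop W [Us [Hne [HUs ->]]] F HF.
  exists Us; split; [exact Hne |]; split; [| split; [exact HF | auto]].
  intros U HU; split; [apply Hop, HUs, HU |].
  destruct HF as [_ Hmeet]. destruct (Hmeet U HU) as [x [_ Ux]]; exists x; exact Ux.
Qed.

(* The cover of F by the members of v meeting F has a finite subcover by compactness. *)
Lemma expb_family_cover :
  open_cover (open t) v -> forall F : expb t, exists W, @expb_family X t v W /\ W F.
Proof.
  intros [Hop Hcov] F. destruct (proj2_sig F) as [[x0 Fx0] Hcpt].
  set (I := {U : set X | v U /\ meets (proj1_sig F) U}).
  destruct (Hcpt I (fun i => proj1_sig i)) as [l Hl].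
  - intros i; apply Hop, (proj1 (proj2_sig i)).
  - intros x Fx. destruct (Hcov x) as [U [HU Ux]].
    exists (exist _ U (conj HU (ex_intro _ x (conj Fx Ux)))); exact Ux.
  - set (Us := map (fun i : I => proj1_sig i) l).
    exists (vietoris_basic Us); split; [exists Us; repeat split |].
    + destruct (Hl x0 Fx0) as [i [Hi _]]; destruct l; [destruct Hi | discriminate].
    + intros U HU; apply in_map_iff in HU.
      destruct HU as [i [<- _]]; exact (proj1 (proj2_sig i)).
    + split.
      * intros x Fx; destruct (Hl x Fx) as [i [Hi Ui]].
        exists (proj1_sig i); split; [apply in_map; exact Hi | exact Ui].
      * intros U HU; apply in_map_iff in HU.
        destruct HU as [i [<- _]]; exact (proj2 (proj2_sig i)).
Qed.

Lemma expb_family_star_finite :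
  star_finite v -> star_finite (@expb_family X t v).
Proof.
  intros Hsf W [Us [_ [HUs ->]]].
  apply finite_coll_sub with
    (fun W => exists Vs, (forall V, In V Vs ->
                           exists U, In U Us /\ (v V /\ meets U V)) /\
                         W = vietoris_basic Vs).
  - intros W [[Vs [_ [HVs ->]]] Hmeet]. exists Vs; split; [| reflexivity].
    intros V HV. destruct (meets_vietoris_basic Hmeet V HV) as [U [HU HUV]].
    exists U; auto.
  - apply finite_coll_vietoris_basic, finite_coll_list_union.
    intros U HU; exact (Hsf U (HUs U HU)).
Qed.

Lemma expb_family_component_finite :
  (forall U, v U -> finite_coll (component v U)) ->
  forall W, @expb_family X t v W -> finite_coll (component (@expb_family X t v) W).
Proof.
  intros Hcomp W [Us [_ [HUs ->]]].
  apply finite_coll_sub with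
    (fun W => exists Vs, (forall V, In V Vs -> exists U, In U Us /\ chained v U V) /\
                         W = vietoris_basic Vs).
  - intros W HW. destruct (component_expb_family HUs HW) as [Vs [-> HVs]].
    exists Vs; auto.
  - apply finite_coll_vietoris_basic, finite_coll_list_union.
    intros U HU; exact (Hcomp U (HUs U HU)).
Qed.

End Vietoris.

Theorem lemma3 (X : Type) (t : topology X) (v : set (set X)) :
  tychonoff t ->
  finite_component_cover (open t) v ->
  finite_component_cover (@expb_open X t) (@expb_family X t v).
Proof.
  intros _ [Hcover [Hsf Hcomp]].
  split; [split | split].
  - apply expb_family_open, Hcover.
  - apply expb_family_cover, Hcover.
  - apply expb_family_star_finite, Hsf.
  - apply expb_family_component_finite, Hcomp.
Qed.
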